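(* Let $d,l,m\geq1$, fix arbitrary norms $\|\cdot\|$ on $H(d)$ and on $M_{lm}(\mathbb{R})$, and let $\mathcal{Q}=\{P_1,\dots,P_l\}$ be a measurement scheme of POVMs with outcome set $\{1,\dots,m\}$ which determines any pure state among all states. Then there is a constant $C_{\mathcal{Q}}>0$ such that for every $\epsilon>0$, every pure state $\sigma$ and every $f\in M_{lm}(\mathbb{R})$ with $\|f\|\leq\epsilon$, setting $b=M_{\mathcal{Q}}(\sigma)+f$, any minimizer $Y^*$ of the convex program $$\text{minimize } \|M_{\mathcal{Q}}(Y)-b\|_2\quad\text{subject to } Y\in H(d),\ Y\geq0$$ satisfies $\|Y^*-\sigma\|\leq C_{\mathcal{Q}}\,\epsilon$. Here $\|\cdot\|_2$ is the Hilbert–Schmidt (Frobenius) norm on $M_{lm}(\mathbb{R})$.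
   Context: $H(d)$ is the real vector space of $d\times d$ complex Hermitian matrices and $M_{lm}(\mathbb{R})$ the real $l\times m$ matrices. A POVM with outcome set $\{1,\dots,m\}$ is a map $j\mapsto P(j)\in H(d)$ with $P(j)\geq0$ and $\sum_j P(j)=\mathbb{1}$. The scheme induces $M_{\mathcal{Q}}:H(d)\to M_{lm}(\mathbb{R})$, $M_{\mathcal{Q}}(X)_{i,j}=\mathrm{tr}(XP_i(j))$. A state is a positive semidefinite trace-one matrix; a pure state is a rank-one state $|\psi\rangle\langle\psi|$. $\mathcal{Q}$ determines any pure state among all states if for every pure state $\sigma$ and every state $\varrho$, $M_{\mathcal{Q}}(\sigma)=M_{\mathcal{Q}}(\varrho)$ implies $\varrho=\sigma$. *)

From HB Require Import structures.
From mathcomp Require Import all_boot all_order all_algebra.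
From mathcomp Require Import reals complex.
Set Implicit Arguments. Unset Strict Implicit. Unset Printing Implicit Defensive.
Import Order.TTheory GRing.Theory Num.Theory.
Local Open Scope ring_scope.
Local Open Scope complex_scope.

Section Defs.
Variable R : realType.
Local Notation C := R[i].

Definition adj (p q : nat) (A : 'M[C]_(p, q)) : 'M[C]_(q, p) :=
  \matrix_(i, j) (A j i)^*.

Definition hermitian (d : nat) (A : 'M[C]_d) : Prop := adj A = A.

Definition psd (d : nat) (A : 'M[C]_d) : Prop :=
  hermitian A /\ forall v : 'cV[C]_d, 0 <= (adj v *m A *m v) 0 0.

Definition state (d : nat) (A : 'M[C]_d) : Prop := psd A /\ \tr A = 1.

Definition pure_state (d : nat) (A : 'M[C]_d) : Prop :=
  state A /\ \rank A = 1%N.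

Definition POVM (d m : nat) (P : 'I_m -> 'M[C]_d) : Prop :=
  (forall j, psd (P j)) /\ \sum_(j < m) P j = 1%:M.

(* the map M_Q : H(d) -> M_{lm}(R), X |-> (tr (X P_i(j)))_{i,j};
   the trace is real for Hermitian X, P_i(j); we take its real part. *)
Definition measmap (d l m : nat) (P : 'I_l -> 'I_m -> 'M[C]_d) (X : 'M[C]_d)
  : 'M[R]_(l, m) := \matrix_(i, j) complex.Re (\tr (X *m P i j)).

Definition determines_pure (d l m : nat) (P : 'I_l -> 'I_m -> 'M[C]_d) : Prop :=
  forall sigma rho : 'M[C]_d, pure_state sigma -> state rho ->
    measmap P sigma = measmap P rho -> rho = sigma.

(* a norm on the real vector space H(d) (only its values on H(d) matter) *)
Definition herm_norm (d : nat) (N : 'M[C]_d -> R) : Prop :=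
  [/\ forall X, hermitian X -> 0 <= N X,
      forall X, hermitian X -> N X = 0 -> X = 0,
      forall (a : R) X, hermitian X -> N (a%:C *: X) = `|a| * N X
    & forall X Y, hermitian X -> hermitian Y -> N (X + Y) <= N X + N Y].

Definition mx_norm (l m : nat) (N : 'M[R]_(l, m) -> R) : Prop :=
  [/\ forall X, 0 <= N X,
      forall X, N X = 0 -> X = 0,
      forall (a : R) X, N (a *: X) = `|a| * N X
    & forall X Y, N (X + Y) <= N X + N Y].

Definition frob (l m : nat) (X : 'M[R]_(l, m)) : R :=
  Num.sqrt (\sum_(i < l) \sum_(j < m) X i j ^+ 2).

Definition is_minimizer (d l m : nat) (P : 'I_l -> 'I_m -> 'M[C]_d)
  (b : 'M[R]_(l, m)) (Y : 'M[C]_d) : Prop :=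
  psd Y /\ forall Y' : 'M[C]_d, psd Y' ->
    frob (measmap P Y - b) <= frob (measmap P Y' - b).

End Defs.

(* Write X = Y - sigma.  As sigma is pure it annihilates a hyperplane r^perp, and
   Y >= 0, so X is positive semidefinite on r^perp; testing the minimality of Y
   against sigma itself gives |M_Q(X)| <= 2 |f|.  It remains to bound |X| by
   |M_Q(X)| on the closed cone of Hermitian matrices that are psd on some
   hyperplane.  By homogeneity and compactness of the normalised pairs (X, r) this
   reduces to: M_Q(X) = 0 forces X = 0.  Such an X has trace 0, and its least
   eigenvalue lam, with unit eigenvector e, is its only possible negative one; if
   lam < 0 then (X - lam e e^* ) / (-lam) is a state with the same statistics as the
   pure state e e^*, so it equals e e^* and X = 0.  The arbitrary norms are handled
   by comparison with entrywise 1-norms, again by compactness. *)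

From HB Require Import structures.
From mathcomp Require Import all_boot all_order all_algebra.
From mathcomp Require Import reals complex.
From mathcomp Require Import ring lra.
From mathcomp Require Import classical_sets boolp functions topology normedtype derive.
From mathcomp Require Import matrix_normedtype.
Set Implicit Arguments. Unset Strict Implicit. Unset Printing Implicit Defensive.
Import Order.TTheory GRing.Theory Num.Theory.
Import numFieldTopology.Exports numFieldNormedType.Exports.
Local Open Scope ring_scope.

Section ComplexNumbers.
Local Open Scope complex_scope.
Variable R : realType.
Local Notation C := R[i].

Lemma Creal_Im (x : C) : x \is Num.real -> complex.Im x = 0.
Proof. by move/CrealP; case: x => a b [] /=; lra. Qed.

Lemma Creal_real (x : R) : x%:C \is Num.real.
Proof. by apply/CrealP; exact: conjc_real. Qed.

Lemma Creal_ReE (x : C) : x \is Num.real -> x = (complex.Re x)%:C.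
Proof. by move=> /Creal_Im; case: x => a b /= ->. Qed.

Lemma Re_lec (x y : C) : x \is Num.real -> y \is Num.real ->
  (complex.Re x <= complex.Re y) = (x <= y).
Proof. by move=> /Creal_Im xi /Creal_Im yi; rewrite lecE xi yi eqxx. Qed.

Lemma normc_le1 (x : C) : x^* * x <= 1 ->
  `|complex.Re x| <= 1 /\ `|complex.Im x| <= 1.
Proof.
case: x => a b; rewrite lecE /= => /andP[_ ab].
by split; rewrite ler_norml; apply/andP; split; nra.
Qed.

End ComplexNumbers.

Section Sesquilinear.
Local Open Scope complex_scope.
Variable R : realType.
Local Notation C := R[i].

Lemma adjK p q (A : 'M[C]_(p, q)) : adj (adj A) = A.
Proof. by apply/matrixP => i j; rewrite !mxE conjcK. Qed.

Lemma adjM p q r (A : 'M[C]_(p, q)) (B : 'M[C]_(q, r)) :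
  adj (A *m B) = adj B *m adj A.
Proof.
by apply/matrixP => i j; rewrite !mxE rmorph_sum; apply: eq_bigr => k _;
  rewrite !mxE rmorphM mulrC.
Qed.

Lemma adjD p q (A B : 'M[C]_(p, q)) : adj (A + B) = adj A + adj B.
Proof. by apply/matrixP => i j; rewrite !mxE rmorphD. Qed.

Lemma adjN p q (A : 'M[C]_(p, q)) : adj (- A) = - adj A.
Proof. by apply/matrixP => i j; rewrite !mxE rmorphN. Qed.

Lemma adjZ p q c (A : 'M[C]_(p, q)) : adj (c *: A) = c^* *: adj A.
Proof. by apply/matrixP => i j; rewrite !mxE rmorphM. Qed.

Lemma adj0 p q : adj (0 : 'M[C]_(p, q)) = 0.
Proof. by apply/matrixP => i j; rewrite !mxE conjc0. Qed.

Lemma adj_delta p q i j : adj (delta_mx i j : 'M[C]_(p, q)) = delta_mx j i.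
Proof. by apply/matrixP => a b; rewrite !mxE conjc_nat andbC. Qed.

Lemma hermitian1 n : hermitian (1%:M : 'M[C]_n).
Proof. by apply/matrixP => i j; rewrite !mxE conjc_nat eq_sym. Qed.

Lemma hermitianD n (X Y : 'M[C]_n) :
  hermitian X -> hermitian Y -> hermitian (X + Y).
Proof. by move=> hX hY; rewrite /hermitian adjD hX hY. Qed.

Lemma hermitianB n (X Y : 'M[C]_n) :
  hermitian X -> hermitian Y -> hermitian (X - Y).
Proof. by move=> hX hY; rewrite /hermitian adjD adjN hX hY. Qed.

Lemma hermitianZ n (c : C) (X : 'M[C]_n) :
  c \is Num.real -> hermitian X -> hermitian (c *: X).
Proof. by move=> /conj_Creal cR hX; rewrite /hermitian adjZ hX cR. Qed.

Lemma hermitian_rank1 n (e : 'cV[C]_n) : hermitian (e *m adj e).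
Proof. by rewrite /hermitian adjM adjK. Qed.

Definition sesq n (A : 'M[C]_n) (u v : 'cV[C]_n) : C := (adj u *m A *m v) 0 0.
Definition dotc n (u v : 'cV[C]_n) : C := (adj u *m v) 0 0.

Definition psd_orth n (X : 'M[C]_n) (r : 'cV[C]_n) : Prop :=
  forall y, dotc r y = 0 -> 0 <= sesq X y y.

Definition rayleigh_min n (X : 'M[C]_n) (e : 'cV[C]_n) : Prop :=
  dotc e e = 1 /\ forall z, sesq X e e * dotc z z <= sesq X z z.

Variable n : nat.
Implicit Types (A X : 'M[C]_n) (u v w y z e r : 'cV[C]_n).

Lemma sesqDl A u1 u2 v : sesq A (u1 + u2) v = sesq A u1 v + sesq A u2 v.
Proof. by rewrite /sesq adjD !mulmxDl mxE. Qed.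

Lemma sesqDr A u v1 v2 : sesq A u (v1 + v2) = sesq A u v1 + sesq A u v2.
Proof. by rewrite /sesq !mulmxDr mxE. Qed.

Lemma sesqZl A c u v : sesq A (c *: u) v = c^* * sesq A u v.
Proof. by rewrite /sesq adjZ -!scalemxAl mxE. Qed.

Lemma sesqZr A c u v : sesq A u (c *: v) = c * sesq A u v.
Proof. by rewrite /sesq -!scalemxAr mxE. Qed.

Lemma sesqBr A u v1 v2 : sesq A u (v1 - v2) = sesq A u v1 - sesq A u v2.
Proof. by rewrite -scaleN1r sesqDr sesqZr mulN1r. Qed.

Lemma sesq_mxB A X u v : sesq (A - X) u v = sesq A u v - sesq X u v.
Proof. by rewrite /sesq mulmxBr mulmxBl mxE [in X in _ + X]mxE. Qed.

Lemma sesq_mxZ A c u v : sesq (c *: A) u v = c * sesq A u v.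
Proof. by rewrite /sesq -scalemxAr -scalemxAl mxE. Qed.

Lemma sesq1 u v : sesq 1%:M u v = dotc u v.
Proof. by rewrite /sesq mulmx1. Qed.

Lemma sesq_rank1 e z w : sesq (e *m adj e) z w = dotc z e * dotc e w.
Proof. by rewrite /sesq /dotc !mulmxA -(mulmxA (adj z *m e)) mxE big_ord1. Qed.

Lemma sesq_delta A i j : sesq A (delta_mx i 0) (delta_mx j 0) = A i j.
Proof. by rewrite /sesq adj_delta -rowE -colE !mxE. Qed.

Lemma sesq_conj A u v : hermitian A -> (sesq A u v)^* = sesq A v u.
Proof.
move=> hA; rewrite /sesq.
have adj11 (M : 'M[C]_1) : (M 0 0)^* = adj M 0 0 by rewrite mxE.
by rewrite adj11 !adjM adjK hA mulmxA.
Qed.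

Lemma sesq_real A v : hermitian A -> sesq A v v \is Num.real.
Proof. by move=> hA; apply/CrealP; exact: sesq_conj. Qed.

Lemma dotc_conj u v : (dotc u v)^* = dotc v u.
Proof. by rewrite -!sesq1 (sesq_conj _ _ (@hermitian1 n)). Qed.

Lemma dotcDr u v w : dotc u (v + w) = dotc u v + dotc u w.
Proof. by rewrite -!sesq1 sesqDr. Qed.

Lemma dotcBr u v w : dotc u (v - w) = dotc u v - dotc u w.
Proof. by rewrite -!sesq1 sesqBr. Qed.

Lemma dotcZl c u v : dotc (c *: u) v = c^* * dotc u v.
Proof. by rewrite -!sesq1 sesqZl. Qed.

Lemma dotcZr c u v : dotc u (c *: v) = c * dotc u v.
Proof. by rewrite -!sesq1 sesqZr. Qed.

Lemma dotc_ge0 u : 0 <= dotc u u.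
Proof.
rewrite /dotc mxE; apply: sumr_ge0 => k _; rewrite mxE mulrC.
exact: mul_conjC_ge0.
Qed.

Lemma dotc_gt0 u : u != 0 -> 0 < dotc u u.
Proof.
move=> u0; rewrite lt_def dotc_ge0 andbT; apply: contra u0; rewrite /dotc mxE.
move=> /eqP u2; apply/eqP/matrixP => k o; rewrite (ord1 o) mxE.
have /eqP : adj u 0 k * u k 0 = 0.
  by apply: (psumr_eq0P _ u2) => // i _; rewrite mxE mulrC mul_conjC_ge0.
by rewrite mxE mulrC mul_conjC_eq0 => /eqP.
Qed.

Lemma dotc_entry_le u k : (u k 0)^* * u k 0 <= dotc u u.
Proof.
rewrite /dotc mxE (bigD1 k) //= mxE lerDl; apply: sumr_ge0 => i _.
by rewrite mxE mulrC mul_conjC_ge0.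
Qed.

Lemma normalize_vector u : u != 0 -> exists c : C, c^* * c = (dotc u u)^-1.
Proof.
move=> u0; have uu := dotc_gt0 u0.
exists (sqrtC (dotc u u))^-1.
rewrite (conj_Creal (gtr0_real _)) ?invr_gt0 ?sqrtC_gt0 //.
by rewrite -expr2 exprVn sqrtCK.
Qed.

Lemma psd_isotropic A e : psd A -> sesq A e e = 0 -> forall w, sesq A w e = 0.
Proof.
move=> [hA pA] he w; set b := sesq A w e; set Q := sesq A w w.
have Q0 : 0 <= Q by exact: pA.
pose k := (1 + Q)^-1.
have k0 : 0 < k by rewrite invr_gt0 ltr_wpDr.
have kQ : k * Q - 2 < 0.
  have kQ1 : k * Q <= 1 by rewrite /k mulrC ler_pdivrMr ?ltr_wpDr // mul1r lerDr.
  by rewrite subr_lt0 (le_lt_trans kQ1) // ltr1n.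
(* The form at [e - b k w] equals [|b|^2 k (k Q - 2)], which is nonnegative only if [b = 0]. *)
have := pA (e + (- (b * k)) *: w).
rewrite -/(sesq A _ _) !sesqDl !sesqDr !sesqZl !sesqZr he -(sesq_conj _ _ hA) -/b -/Q.
rewrite rmorphN rmorphM /= (conj_Creal (gtr0_real k0)) add0r.
have -> : - (b * k) * b^* + (- (b^* * k) * b + - (b^* * k) * (- (b * k) * Q))
   = (b * b^*) * k * (k * Q - 2) by ring.
rewrite nmulr_lge0 // pmulr_lle0 // => bb.
apply/eqP; rewrite -mul_conjC_eq0 eq_le bb.
exact: mul_conjC_ge0.
Qed.

Lemma rayleigh_min_eigvec X e : hermitian X -> rayleigh_min X e ->
  forall w, sesq X w e = sesq X e e * dotc w e.
Proof.
move=> hX [e1 emin] w; set lam := sesq X e e.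
have hP : psd (X - lam *: 1%:M).
  split; first exact: hermitianB hX (hermitianZ (sesq_real e hX) (@hermitian1 n)).
  by move=> z; rewrite -/(sesq _ z z) sesq_mxB sesq_mxZ sesq1 subr_ge0.
apply/eqP; rewrite -subr_eq0 -sesq1 -sesq_mxZ -sesq_mxB; apply/eqP.
by apply: psd_isotropic hP _ w; rewrite sesq_mxB sesq_mxZ sesq1 e1 mulr1 subrr.
Qed.

Lemma psd_orth_rayleigh_min X r e : hermitian X -> psd_orth X r ->
  rayleigh_min X e -> sesq X e e < 0 -> psd_orth X e.
Proof.
move=> hX hXr emin lam0 z ez; set lam := sesq X e e in lam0.
have Xze : sesq X z e = 0.
  by rewrite rayleigh_min_eigvec // -dotc_conj ez conjc0 mulr0.
have Xez : sesq X e z = 0 by rewrite -sesq_conj // Xze conjc0.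
rewrite (real_leNgt (real0 _) (sesq_real z hX)); apply/negP => zneg.
(* The combination [<r,z> e - <r,e> z] is orthogonal to [r], but the form is
   negative on it unless [<r,e> = 0], and then [e] itself is orthogonal to [r]. *)
pose a := dotc r z; pose b := - dotc r e.
have ry : dotc r (a *: e + b *: z) = 0 by rewrite dotcDr !dotcZr mulNr mulrC subrr.
have := hXr _ ry.
rewrite !sesqDl !sesqDr !sesqZl !sesqZr Xze Xez !mulr0 addr0 add0r !mulrA.
have ta : a^* * a * lam <= 0 by rewrite nmulr_lle0 // mulrC mul_conjC_ge0.
have tb : b^* * b * sesq X z z <= 0 by rewrite nmulr_lle0 // mulrC mul_conjC_ge0.
move=> sum_ge0; have /eqP : b^* * b * sesq X z z = 0.
  by apply/eqP; rewrite eq_le tb -(lerD2l (a^* * a * lam)) addr0 (le_trans ta).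
rewrite mulf_eq0 (lt_eqF zneg) orbF mulrC mul_conjC_eq0 oppr_eq0 => /eqP re.
by have := lt_le_trans lam0 (hXr e re); rewrite ltxx.
Qed.

Lemma psd_sub_rayleigh_min X r e : hermitian X -> psd_orth X r ->
  rayleigh_min X e -> sesq X e e < 0 -> psd (X - sesq X e e *: (e *m adj e)).
Proof.
move=> hX hXr emin lam0; have [e1 _] := emin; set lam := sesq X e e.
have Xe := rayleigh_min_eigvec hX emin.
have hXe := psd_orth_rayleigh_min hX hXr emin lam0.
split; first exact: hermitianB hX (hermitianZ (sesq_real e hX) (hermitian_rank1 e)).
move=> z; rewrite -/(sesq _ z z) sesq_mxB sesq_mxZ sesq_rank1 -(dotc_conj e z).
have [z' [ez' ->]] : exists z', dotc e z' = 0 /\ z = z' + dotc e z *: e.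
  by exists (z - dotc e z *: e); rewrite dotcBr dotcZr e1 mulr1 subrr subrK.
set a := dotc e _.
have Xz'e : sesq X z' e = 0 by rewrite Xe -dotc_conj ez' conjc0 mulr0.
have Xez' : sesq X e z' = 0 by rewrite -sesq_conj // Xz'e conjc0.
rewrite dotcDr dotcZr ez' e1 add0r mulr1 !sesqDl !sesqDr !sesqZl !sesqZr.
rewrite Xz'e Xez' -/lam !mulr0 add0r addr0.
rewrite -addrA (_ : a^* * (a * lam) - lam * (a^* * a) = 0) ?addr0; first exact: hXe.
by ring.
Qed.

Lemma psd_orthE X r : dotc r r = 1 -> hermitian X ->
  psd_orth X r <->
  forall z, 0 <= complex.Re (sesq X (z - dotc r z *: r) (z - dotc r z *: r)).
Proof.
move=> r1 hX; split => [Xr z | Xr y ry].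
  have /Xr : dotc r (z - dotc r z *: r) = 0 by rewrite dotcBr dotcZr r1 mulr1 subrr.
  by rewrite lecE => /andP[].
by have := Xr y; rewrite ry scale0r subr0 {2}(Creal_ReE (sesq_real y hX)) ler0c.
Qed.

End Sesquilinear.

Section States.
Local Open Scope complex_scope.
Variable R : realType.
Local Notation C := R[i].
Variable n : nat.
Implicit Types (s X Y : 'M[C]_n) (e r y : 'cV[C]_n).

Lemma psdZ (c : C) Y : 0 <= c -> psd Y -> psd (c *: Y).
Proof.
move=> c0 [hY pY]; split; first exact: hermitianZ (ger0_real c0) hY.
by move=> v; rewrite -/(sesq _ v v) sesq_mxZ mulr_ge0 //; exact: pY.
Qed.

Lemma psd_trace_eq0 Y : psd Y -> \tr Y = 0 -> Y = 0.
Proof.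
move=> hY t0.
have Yii i : sesq Y (delta_mx i 0) (delta_mx i 0) = 0.
  rewrite sesq_delta; apply: (psumr_eq0P _ t0) => // k _.
  by rewrite -sesq_delta; exact: hY.2.
by apply/matrixP => i j; rewrite mxE -sesq_delta; exact: psd_isotropic hY (Yii j) _.
Qed.

Lemma pure_state_rank1 e : dotc e e = 1 -> pure_state (e *m adj e).
Proof.
move=> e1; have tr1 : \tr (e *m adj e) = 1 by rewrite mxtrace_mulC trace_mx11.
split; first split => //; first split.
- exact: hermitian_rank1.
- move=> z; rewrite -/(sesq _ z z) sesq_rank1 -dotc_conj mulrC.
  exact: mul_conjC_ge0.
apply/eqP; rewrite eqn_leq (leq_trans (mxrankM_maxl _ _) (rank_leq_col _)) /=.
rewrite lt0n mxrank_eq0; apply/eqP => e0.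
by move: tr1; rewrite e0 mxtrace0 => /eqP; rewrite eq_sym oner_eq0.
Qed.

Lemma pure_state_ker s : pure_state s ->
  exists r, dotc r r = 1 /\ forall y, dotc r y = 0 -> s *m y = 0.
Proof.
move=> [_ rk].
have [i0 si0] : exists i0, row i0 s != 0.
  apply/existsP; apply: contraT; rewrite negb_exists => /forallP s0.
  suff : s = 0 by move=> s0'; move: rk; rewrite s0' mxrank0.
  by apply/row_matrixP => i; rewrite row0; apply/eqP/negPn/s0.
(* [s] has rank one, so its row space is spanned by any nonzero row. *)
have [D sD] : exists D, s = D *m row i0 s.
  apply/submxP; have [_ <-] := mxrank_leqif_sup (row_sub i0 s).
  apply/eqP/anti_leq; rewrite (mxrank_leqif_sup (row_sub i0 s)).1 /=.
  by rewrite rk lt0n mxrank_eq0.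
pose r' := adj (row i0 s).
have r'0 : r' != 0 by apply: contra si0 => /eqP r'0; rewrite -[row i0 s]adjK -/r' r'0 adj0.
have [c cc] := normalize_vector r'0.
have c0 : c != 0.
  apply/eqP => c0; move: cc; rewrite c0 mulr0 => /esym/eqP.
  by rewrite invr_eq0 gt_eqF ?dotc_gt0.
exists (c *: r'); split; first by rewrite dotcZl dotcZr mulrA cc mulVf // gt_eqF ?dotc_gt0.
move=> y; rewrite dotcZl => /eqP; rewrite mulf_eq0 conjc_eq0 (negbTE c0) /= => /eqP r'y.
rewrite sD -mulmxA; suff -> : row i0 s *m y = 0 by rewrite mulmx0.
by apply/matrixP => a b; rewrite (ord1 a) (ord1 b) [RHS]mxE -r'y /dotc adjK.
Qed.

Lemma psd_orth_sub_pure s Y : pure_state s -> psd Y ->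
  exists r, dotc r r = 1 /\ psd_orth (Y - s) r.
Proof.
move=> hs [_ pY]; have [r [r1 ker]] := pure_state_ker hs.
exists r; split => // y ry.
by rewrite sesq_mxB {2}/sesq -mulmxA ker // mulmx0 mxE subr0; exact: pY.
Qed.

End States.

Section ComplexContinuity.
Local Open Scope complex_scope.
Variables (R : realType) (T : topologicalType).
Local Notation C := R[i].

Definition ccontinuous (g : T -> C) : Prop :=
  continuous (fun t => complex.Re (g t)) /\ continuous (fun t => complex.Im (g t)).

Definition mxcontinuous p q (A : T -> 'M[C]_(p, q)) : Prop :=
  forall i j, ccontinuous (fun t => A t i j).

Lemma continuous_eqfun (f g : T -> R) : continuous f -> f =1 g -> continuous g.
Proof. by move=> + /funext <-. Qed.

Lemma ccontinuous_eqfun (f g : T -> C) : ccontinuous f -> f =1 g -> ccontinuous g.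
Proof. by move=> + /funext <-. Qed.

Lemma continuous_sum (I : finType) (F : I -> T -> R) :
  (forall i, continuous (F i)) -> continuous (fun t => \sum_i F i t).
Proof. by move=> cF; apply: continuous_big => //; exact: add_continuous. Qed.

Lemma continuous_norm (f : T -> R) : continuous f -> continuous (fun t => `|f t|).
Proof. by move=> cf t; apply: continuous_comp (cf t) (@norm_continuous _ R^o _). Qed.

Lemma ccontinuous_cst (a : C) : ccontinuous (fun _ => a).
Proof. by split => t; exact: cst_continuous. Qed.

Lemma ccontinuousD f g :
  ccontinuous f -> ccontinuous g -> ccontinuous (fun t => f t + g t).
Proof.
move=> [fr fi] [gr gi]; split.
  by apply: continuous_eqfun (fun t => continuousD (fr t) (gr t)) _ => t; rewrite raddfD.
by apply: continuous_eqfun (fun t => continuousD (fi t) (gi t)) _ => t; rewrite raddfD.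
Qed.

Lemma ccontinuousN f : ccontinuous f -> ccontinuous (fun t => - f t).
Proof.
move=> [fr fi]; split.
  by apply: continuous_eqfun (fun t => continuousN (fr t)) _ => t; rewrite raddfN.
by apply: continuous_eqfun (fun t => continuousN (fi t)) _ => t; rewrite raddfN.
Qed.

Lemma ccontinuousM f g :
  ccontinuous f -> ccontinuous g -> ccontinuous (fun t => f t * g t).
Proof.
move=> [fr fi] [gr gi]; split.
  apply: continuous_eqfun
    (fun t => continuousB (continuousM (fr t) (gr t)) (continuousM (fi t) (gi t))) _.
  by move=> t; rewrite !fctE /=; case: (f t) => ? ?; case: (g t).
apply: continuous_eqfun
  (fun t => continuousD (continuousM (fr t) (gi t)) (continuousM (fi t) (gr t))) _.
by move=> t; rewrite !fctE /=; case: (f t) => ? ?; case: (g t).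
Qed.

Lemma ccontinuousJ f : ccontinuous f -> ccontinuous (fun t => (f t)^*).
Proof.
move=> [fr fi]; split; first by apply: continuous_eqfun fr _ => t; case: (f t).
by apply: continuous_eqfun (fun t => continuousN (fi t)) _ => t; case: (f t).
Qed.

Lemma ccontinuous_sum (I : finType) (F : I -> T -> C) :
  (forall i, ccontinuous (F i)) -> ccontinuous (fun t => \sum_i F i t).
Proof.
move=> cF; split.
  by apply: continuous_eqfun (continuous_sum (fun i => (cF i).1)) _ => t; rewrite raddf_sum.
by apply: continuous_eqfun (continuous_sum (fun i => (cF i).2)) _ => t; rewrite raddf_sum.
Qed.

Lemma mxcontinuous_cst p q (M : 'M[C]_(p, q)) : mxcontinuous (fun _ => M).
Proof. by move=> i j; exact: ccontinuous_cst. Qed.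

Lemma mxcontinuousD p q (A B : T -> 'M[C]_(p, q)) :
  mxcontinuous A -> mxcontinuous B -> mxcontinuous (fun t => A t + B t).
Proof.
move=> cA cB i j.
by apply: ccontinuous_eqfun (ccontinuousD (cA i j) (cB i j)) _ => t; rewrite mxE.
Qed.

Lemma mxcontinuousN p q (A : T -> 'M[C]_(p, q)) :
  mxcontinuous A -> mxcontinuous (fun t => - A t).
Proof.
by move=> cA i j; apply: ccontinuous_eqfun (ccontinuousN (cA i j)) _ => t; rewrite mxE.
Qed.

Lemma mxcontinuousZ p q (c : T -> C) (A : T -> 'M[C]_(p, q)) :
  ccontinuous c -> mxcontinuous A -> mxcontinuous (fun t => c t *: A t).
Proof.
move=> cc cA i j.
by apply: ccontinuous_eqfun (ccontinuousM cc (cA i j)) _ => t; rewrite mxE.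
Qed.

Lemma mxcontinuous_adj p q (A : T -> 'M[C]_(p, q)) :
  mxcontinuous A -> mxcontinuous (fun t => adj (A t)).
Proof.
by move=> cA i j; apply: ccontinuous_eqfun (ccontinuousJ (cA j i)) _ => t; rewrite mxE.
Qed.

Lemma mxcontinuousM p q r (A : T -> 'M[C]_(p, q)) (B : T -> 'M[C]_(q, r)) :
  mxcontinuous A -> mxcontinuous B -> mxcontinuous (fun t => A t *m B t).
Proof.
move=> cA cB i j.
apply: ccontinuous_eqfun (ccontinuous_sum (fun k => ccontinuousM (cA i k) (cB k j))) _.
by move=> t; rewrite mxE.
Qed.

Lemma ccontinuous_sesq n (A : T -> 'M[C]_n) (u v : T -> 'cV[C]_n) :
  mxcontinuous A -> mxcontinuous u -> mxcontinuous v ->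
  ccontinuous (fun t => sesq (A t) (u t) (v t)).
Proof.
by move=> cA cu cv; exact: (mxcontinuousM (mxcontinuousM (mxcontinuous_adj cu) cA) cv).
Qed.

Lemma ccontinuous_dotc n (u v : T -> 'cV[C]_n) :
  mxcontinuous u -> mxcontinuous v -> ccontinuous (fun t => dotc (u t) (v t)).
Proof. by move=> cu cv; exact: (mxcontinuousM (mxcontinuous_adj cu) cv). Qed.

End ComplexContinuity.

Section Closedness.
Local Open Scope classical_set_scope.
Variables (R : realType) (T : topologicalType).
Local Notation C := R[i].

Lemma closed_eqfun (f g : T -> R) : continuous f -> continuous g -> closed [set t | f t = g t].
Proof.
move=> cf cg; rewrite (_ : [set t | _] = (fun t => f t - g t) @^-1` [set 0]).
  apply: preimage_closed; last exact: closed_eq.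
  by move=> t _; exact: (continuousB (cf t) (cg t)).
apply/seteqP; split => t /=; first by move=> ->; rewrite subrr.
by move/eqP; rewrite subr_eq0 => /eqP.
Qed.

Lemma closed_gefun (f : T -> R) a : continuous f -> closed [set t | a <= f t].
Proof.
move=> cf; apply: (@preimage_closed _ _ f [set x | a <= x]); last exact: closed_ge.
by move=> t _; exact: cf.
Qed.

Lemma closed_ceq (f g : T -> C) : ccontinuous f -> ccontinuous g -> closed [set t | f t = g t].
Proof.
move=> [fr fi] [gr gi].
rewrite (_ : [set t | _] = [set t | complex.Re (f t) = complex.Re (g t)] `&`
                          [set t | complex.Im (f t) = complex.Im (g t)]).
  by apply: closedI; exact: closed_eqfun.
apply/seteqP; split => t /=; first by move=> ->.
by case: (f t) (g t) => ? ? [? ?] /= [-> ->].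
Qed.

Lemma closed_mxeq p q (A B : T -> 'M[C]_(p, q)) :
  mxcontinuous A -> mxcontinuous B -> closed [set t | A t = B t].
Proof.
move=> cA cB.
rewrite (_ : [set t | _] =
    \bigcap_(k in [set: 'I_p * 'I_q]) [set t | A t k.1 k.2 = B t k.1 k.2]).
  by apply: closed_bigI => k _; exact: closed_ceq.
apply/seteqP; split => t /= eqAB; first by move=> k _ /=; rewrite eqAB.
by apply/matrixP => i j; exact: (eqAB (i, j)).
Qed.

Lemma closed_psd_orth n (X : T -> 'M[C]_n) (r : T -> 'cV[C]_n) :
  mxcontinuous X -> mxcontinuous r ->
  closed [set t | [/\ hermitian (X t), dotc (r t) (r t) = 1 & psd_orth (X t) (r t)]].
Proof.
move=> cX cr; pose proj t z := z - dotc (r t) z *: r t.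
rewrite (_ : [set t | _] = [set t | adj (X t) = X t] `&` [set t | dotc (r t) (r t) = 1] `&`
    \bigcap_(z in [set: 'cV[C]_n])
      [set t | 0 <= complex.Re (sesq (X t) (proj t z) (proj t z))]).
  have cproj z : mxcontinuous (fun t => proj t z).
    apply: mxcontinuousD (mxcontinuous_cst _ _) (mxcontinuousN (mxcontinuousZ _ cr)).
    exact: ccontinuous_dotc cr (mxcontinuous_cst _ _).
  apply: closedI; first apply: closedI.
  - exact: closed_mxeq (mxcontinuous_adj cX) cX.
  - exact: closed_ceq (ccontinuous_dotc cr cr) (ccontinuous_cst _ _).
  apply: closed_bigI => z _; apply: closed_gefun.
  exact: (ccontinuous_sesq cX (cproj z) (cproj z)).1.
apply/seteqP; split => t /=.
  by move=> [hX r1 /(psd_orthE r1 hX) Xr]; split => // z _; exact: Xr.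
by move=> [[hX r1] Xr]; split => //; apply/(psd_orthE r1 hX) => z; exact: Xr.
Qed.

End Closedness.

(* Complex data are encoded as real row vectors so that compactness arguments can use
   the Heine-Borel theorem [bounded_closed_compact] for ['rV[R]_N]. *)
Section Coordinates.
Local Open Scope complex_scope.
Variables (R : realType) (I : finType).
Local Notation C := R[i].
Local Notation N := #|{: I * bool}|.

Definition ccoord (w : 'rV[R]_N) (t : I) : C :=
  Complex (w 0 (enum_rank (t, false))) (w 0 (enum_rank (t, true))).

Definition cvec (f : I -> C) : 'rV[R]_N :=
  \row_k if (enum_val k).2 then complex.Im (f (enum_val k).1)
         else complex.Re (f (enum_val k).1).

Lemma cvecK f t : ccoord (cvec f) t = f t.
Proof. by rewrite /ccoord !mxE !enum_rankK /=; case: (f t). Qed.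

Lemma ccoord_continuous t : ccontinuous (fun w : 'rV[R]_N => ccoord w t).
Proof. by split; exact: coord_continuous. Qed.

Definition ccoord_mx p q (g : 'I_p -> 'I_q -> I) (w : 'rV[R]_N) : 'M[C]_(p, q) :=
  \matrix_(i, j) ccoord w (g i j).

Lemma ccoord_mx_continuous p q (g : 'I_p -> 'I_q -> I) : mxcontinuous (ccoord_mx g).
Proof.
by move=> i j; apply: ccontinuous_eqfun (ccoord_continuous (g i j)) _ => w; rewrite mxE.
Qed.

Lemma ccoord_mx_cvec p q (g : 'I_p -> 'I_q -> I) f :
  ccoord_mx g (cvec f) = \matrix_(i, j) f (g i j).
Proof. by apply/matrixP => i j; rewrite !mxE cvecK. Qed.

Lemma ccoord_bound w B :
  (forall t, `|complex.Re (ccoord w t)| <= B /\ `|complex.Im (ccoord w t)| <= B) ->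
  forall k, `|w 0 k| <= B.
Proof.
move=> wB k; have := wB (enum_val k).1; rewrite /ccoord.
by case: (enum_val k) (enum_valK k) => t [] /= -> [].
Qed.

End Coordinates.

Section Compactness.
Local Open Scope classical_set_scope.
Variables (R : realType) (N : nat).
Implicit Types (A : set 'rV[R]_N) (F : 'rV[R]_N -> R).

Lemma rV_coord_le_norm (w : 'rV[R]_N) k : `|w 0 k| <= `|w|.
Proof.
rewrite [leRHS]/Num.norm /= mx_normrE.
exact: (le_bigmax _ (fun ij : 'I_1 * 'I_N => `|w ij.1 ij.2|) (0, k)).
Qed.

Lemma rV_bounded_min A F B : A !=set0 -> closed A ->
  (forall w, A w -> forall k, `|w 0 k| <= B) -> continuous F ->
  exists2 w0, A w0 & forall w, A w -> F w0 <= F w.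
Proof.
move=> A0 cA AB cF.
have bA : bounded_set A.
  exists (Num.max B 0); split; first by rewrite realE le_max lexx orbT.
  move=> M BM w Aw; rewrite /= [leLHS]/Num.norm /= mx_normrE.
  have M0 : 0 <= M by apply: le_trans (ltW BM); rewrite le_max lexx orbT.
  apply: bigmax_le => // -[i k] _ /=; rewrite (ord1 i).
  by apply: le_trans (AB _ Aw k) (le_trans _ (ltW BM)); rewrite le_max lexx.
have [w0 w0A w0min] := EVT_min_rV A0 (bounded_closed_compact bA cA)
  (continuous_subspaceT cF).
by exists w0 => [|w Aw]; [rewrite inE in w0A | apply: w0min; rewrite inE].
Qed.

Lemma rV_bounded_pos_lower A F B : closed A ->
  (forall w, A w -> forall k, `|w 0 k| <= B) -> continuous F ->
  (forall w, A w -> 0 < F w) -> exists2 c, 0 < c & forall w, A w -> c <= F w.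
Proof.
move=> cA AB cF Fpos; have [->|/set0P A0] := eqVneq A set0; first by exists 1.
have [w0 Aw0 w0min] := rV_bounded_min A0 cA AB cF.
by exists (F w0); [exact: Fpos | exact: w0min].
Qed.

End Compactness.

Lemma lipschitz_continuous (R : realType) (V : normedModType R) (f : V -> R) (k : R) :
  0 <= k -> (forall x y, `|f x - f y| <= k * `|x - y|) -> continuous f.
Proof.
move=> k0 fk x B /nbhs_ballP [e /= e0 eB].
have k1 : 0 < k + 1 by rewrite ltr_wpDl.
apply/nbhs_ballP; exists (e / (k + 1)); first by rewrite /= divr_gt0.
move=> y; rewrite -ball_normE /= => xy; apply: eB; rewrite -ball_normE /=.
apply: le_lt_trans (fk x y) (le_lt_trans (ler_wpM2l k0 (ltW xy)) _).
by rewrite mulrA ltr_pdivrMr // mulrDr mulr1 [k * e]mulrC ltrDl.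
Qed.

Section Rayleigh.
Local Open Scope classical_set_scope.

Lemma exists_rayleigh_min (R : realType) n (X : 'M[R[i]]_n) : (0 < n)%N ->
  hermitian X -> exists e, rayleigh_min X e.
Proof.
move=> n0 hX.
pose zof := @ccoord_mx R 'I_n n 1 (fun k _ => k).
have czof : mxcontinuous zof by exact: ccoord_mx_continuous.
have zofK (z : 'cV[R[i]]_n) : zof (cvec (fun k => z k 0)) = z.
  by rewrite /zof ccoord_mx_cvec; apply/matrixP => i j; rewrite mxE (ord1 j).
pose S := [set w | dotc (zof w) (zof w) = 1].
have S0 : S !=set0.
  exists (cvec (fun k => (delta_mx (Ordinal n0) 0 : 'cV[R[i]]_n) k 0)).
  by rewrite /S /= zofK -sesq1 sesq_delta mxE eqxx.
have cS : closed S.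
  exact: closed_ceq (ccontinuous_dotc czof czof) (ccontinuous_cst _ _).
have SB w : S w -> forall k, `|w 0 k| <= 1.
  move=> Sw; apply: ccoord_bound => t.
  by apply: normc_le1; have := dotc_entry_le (zof w) t; rewrite Sw mxE.
pose F w := complex.Re (sesq X (zof w) (zof w)).
have [cF _] := ccontinuous_sesq (mxcontinuous_cst _ X) czof czof.
have [w0 Sw0 w0min] := rV_bounded_min S0 cS SB cF.
exists (zof w0); split => // z.
have [->|z0] := eqVneq z 0; first by rewrite /dotc /sesq adj0 !mul0mx !mxE mulr0.
have [c cc] := normalize_vector z0; have zz := dotc_gt0 z0.
have := w0min (cvec (fun k => (c *: z) k 0)).
rewrite /S /F /= zofK dotcZl dotcZr sesqZl sesqZr !mulrA cc mulVf ?gt_eqF //.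
have Xr v : sesq X v v \is Num.real := sesq_real v hX.
rewrite Re_lec; last 2 first; [exact: Xr | by rewrite realM ?realV ?Xr ?gtr0_real |].
by rewrite mulrC ler_pdivlMr // => /(_ erefl).
Qed.

End Rayleigh.

Section Measurement.
Local Open Scope complex_scope.
Variables (R : realType) (d l m : nat) (P : 'I_l -> 'I_m -> 'M[R[i]]_d).
Implicit Types X Y : 'M[R[i]]_d.

Lemma measmapB X Y : measmap P (X - Y) = measmap P X - measmap P Y.
Proof. by apply/matrixP => i j; rewrite !mxE mulmxBl !raddfB. Qed.

Lemma measmapZ (a : R) X : measmap P (a%:C *: X) = a *: measmap P X.
Proof.
apply/matrixP => i j; rewrite !mxE -scalemxAl mxtraceZ.
by case: (\tr _) => x y /=; rewrite !mul0r subr0.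
Qed.

Lemma hermitian_trace_real X : hermitian X -> \tr X \is Num.real.
Proof.
move=> hX; apply/CrealP; rewrite rmorph_sum; apply: eq_bigr => k _.
by have /matrixP/(_ k k) := hX; rewrite mxE.
Qed.

Lemma measmap_eq0_trace X i : POVM (P i) -> hermitian X ->
  measmap P X = 0 -> \tr X = 0.
Proof.
move=> [_ Pi1] hX MX0; rewrite (Creal_ReE (hermitian_trace_real hX)).
have <- : \sum_j measmap P X i j = complex.Re (\tr X).
  under eq_bigr do rewrite mxE.
  by rewrite -raddf_sum -(raddf_sum (@mxtrace _ d)) -mulmx_sumr Pi1 mulmx1.
by rewrite MX0 big1 // => j _; rewrite mxE.
Qed.

Hypotheses (d0 : (0 < d)%N) (l0 : (0 < l)%N).
Hypotheses (hP : forall i, POVM (P i)) (hQ : determines_pure P).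

Lemma psd_orth_measmap_eq0 X r : hermitian X -> psd_orth X r ->
  measmap P X = 0 -> X = 0.
Proof.
move=> hX hXr MX0; have trX := measmap_eq0_trace (hP (Ordinal l0)) hX MX0.
have [e emin] := exists_rayleigh_min d0 hX; have [e1 eX] := emin.
set lam := sesq X e e in eX.
have [lam0|] := boolP (0 <= lam).
  apply: psd_trace_eq0 trX; split => // v.
  exact: le_trans (mulr_ge0 lam0 (dotc_ge0 v)) (eX v).
rewrite -real_ltNge ?real0 ?sesq_real // => lam_lt0.
(* Otherwise [X - lam e e^*] is psd with trace [-lam], and rescaling it gives a state
   with the same measurement statistics as the pure state [e e^*]. *)
have [mu mu0 lamE] : exists2 mu : R, 0 < mu & lam = - mu%:C.
  exists (- complex.Re lam); last by rewrite raddfN opprK; apply: Creal_ReE; exact: sesq_real.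
  by rewrite oppr_gt0 -ltcR -Creal_ReE ?sesq_real.
pose rho := mu^-1%:C *: (X - lam *: (e *m adj e)).
have rho_state : state rho.
  split.
    apply: psdZ (psd_sub_rayleigh_min hX hXr emin lam_lt0).
    by rewrite ler0c invr_ge0 ltW.
  rewrite mxtraceZ raddfB /= mxtraceZ trX mxtrace_mulC trace_mx11 -/(dotc e e) e1.
  by rewrite sub0r mulr1 lamE opprK -rmorphM /= mulVf ?gt_eqF.
have rhoE : rho - e *m adj e = mu^-1%:C *: X.
  rewrite /rho scalerBr scalerA lamE mulrN -rmorphM /= mulVf ?gt_eqF //.
  by rewrite rmorph1 scaleN1r opprK addrK.
have MXe : measmap P (e *m adj e) = measmap P rho.
  by apply/eqP; rewrite eq_sym -subr_eq0 -measmapB rhoE measmapZ MX0 scaler0.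
have mu'0 : mu^-1%:C != 0 :> R[i] by rewrite eq_complex /= invr_eq0 gt_eqF.
move/eqP: (hQ (pure_state_rank1 e1) rho_state MXe).
by rewrite -subr_eq0 rhoE scaler_eq0 (negbTE mu'0) => /eqP.
Qed.

End Measurement.

Section EntrywiseNorms.
Local Open Scope complex_scope.
Variable R : realType.

Definition mxnorm1 p q (M : 'M[R]_(p, q)) : R := \sum_i \sum_j `|M i j|.

Definition cmxnorm1 p q (M : 'M[R[i]]_(p, q)) : R :=
  mxnorm1 (map_mx (@complex.Re R) M) + mxnorm1 (map_mx (@complex.Im R) M).

Variables p q : nat.
Implicit Types (M : 'M[R]_(p, q)) (Z : 'M[R[i]]_(p, q)).

Lemma mxnorm1_ge0 M : 0 <= mxnorm1 M.
Proof. by apply: sumr_ge0 => i _; apply: sumr_ge0. Qed.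

Lemma mxnorm1_entry M i j : `|M i j| <= mxnorm1 M.
Proof.
rewrite /mxnorm1 (bigD1 i) //= (bigD1 j) //= -addrA lerDl.
by apply: addr_ge0; apply: sumr_ge0 => *; last apply: sumr_ge0.
Qed.

Lemma mxnorm1_eq0 M : mxnorm1 M = 0 -> M = 0.
Proof.
move=> M0; apply/matrixP => i j; apply/eqP; rewrite mxE -normr_eq0 eq_le normr_ge0 andbT.
by rewrite -M0 mxnorm1_entry.
Qed.

Lemma mxnorm1Z a M : mxnorm1 (a *: M) = `|a| * mxnorm1 M.
Proof.
rewrite /mxnorm1 mulr_sumr; apply: eq_bigr => i _; rewrite mulr_sumr.
by apply: eq_bigr => j _; rewrite mxE normrM.
Qed.

Lemma mxnorm10 : mxnorm1 (0 : 'M[R]_(p, q)) = 0.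
Proof. by rewrite -(scale0r 0) mxnorm1Z normr0 mul0r. Qed.

Lemma mxnorm1_le M B : (forall i j, `|M i j| <= B) -> mxnorm1 M <= (p * q)%:R * B.
Proof.
move=> MB; apply: le_trans (_ : \sum_(i < p) \sum_(j < q) B <= _).
  by apply: ler_sum => i _; apply: ler_sum => j _.
by rewrite !sumr_const !card_ord -mulrnA mulr_natl mulnC.
Qed.

Lemma cmxnorm1_ge0 Z : 0 <= cmxnorm1 Z.
Proof. exact: addr_ge0 (mxnorm1_ge0 _) (mxnorm1_ge0 _). Qed.

Lemma cmxnorm1_entry Z i j :
  `|complex.Re (Z i j)| <= cmxnorm1 Z /\ `|complex.Im (Z i j)| <= cmxnorm1 Z.
Proof.
have := mxnorm1_entry (map_mx (@complex.Re R) Z) i j.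
have := mxnorm1_entry (map_mx (@complex.Im R) Z) i j; rewrite !mxE => hIm hRe.
split; [apply: le_trans hRe _; rewrite lerDl | apply: le_trans hIm _; rewrite lerDr];
  exact: mxnorm1_ge0.
Qed.

Lemma cmxnorm1_eq0 Z : cmxnorm1 Z = 0 -> Z = 0.
Proof.
move=> /eqP; rewrite paddr_eq0 ?mxnorm1_ge0 //.
move=> /andP[/eqP/mxnorm1_eq0 Re0 /eqP/mxnorm1_eq0 Im0].
apply/matrixP => i j; move/matrixP/(_ i j): Re0; move/matrixP/(_ i j): Im0.
by rewrite !mxE; case: (Z i j) => a b /= -> ->.
Qed.

Lemma cmxnorm1Z (a : R) Z : cmxnorm1 (a%:C *: Z) = `|a| * cmxnorm1 Z.
Proof.
rewrite /cmxnorm1 mulrDr -!mxnorm1Z; congr (_ + _); congr mxnorm1;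
  by apply/matrixP => i j; rewrite !mxE; case: (Z i j) => x y /=; rewrite !mul0r ?subr0 ?addr0.
Qed.

Lemma cmxnorm10 : cmxnorm1 (0 : 'M[R[i]]_(p, q)) = 0.
Proof. by rewrite -(scaler0 _ (0 : R)%:C) cmxnorm1Z normr0 mul0r. Qed.

Lemma cmxnorm1_continuous (T : topologicalType) (A : T -> 'M[R[i]]_(p, q)) :
  mxcontinuous A -> continuous (fun t => cmxnorm1 (A t)).
Proof.
move=> cA.
have cpart (f : R[i] -> R) : (forall i j, continuous (fun t => f (A t i j))) ->
    continuous (fun t => mxnorm1 (map_mx f (A t))).
  move=> cf; apply: continuous_sum => i; apply: continuous_sum => j.
  by apply: continuous_eqfun (continuous_norm (cf i j)) _ => t; rewrite mxE.
exact: (fun t => continuousD (cpart _ (fun i j => (cA i j).1) t)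
                             (cpart _ (fun i j => (cA i j).2) t)).
Qed.

End EntrywiseNorms.

Section NormComparison.
Local Open Scope complex_scope.
Variable R : realType.

Lemma scale_conj_split n (x : R[i]) (E F : 'M[R[i]]_n) :
  x *: E + conjc x *: F =
  (complex.Re x)%:C *: (E + F) + (complex.Im x)%:C *: ('i *: E - 'i *: F).
Proof.
apply/matrixP => a b; rewrite !mxE; case: x => x y /=.
have -> : Complex x y = x%:C + 'i * y%:C.
  by apply/eqP; rewrite eq_complex /=; apply/andP; split; apply/eqP; lra.
have -> : Complex x (- y) = x%:C - 'i * y%:C.
  by apply/eqP; rewrite eq_complex /=; apply/andP; split; apply/eqP; lra.
ring.
Qed.

Lemma subadditive_sum (V : zmodType) (S : V -> Prop) (N : V -> R) (I : finType)
    (F : I -> V) :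
  S 0 -> N 0 = 0 -> (forall x y, S x -> S y -> S (x + y) /\ N (x + y) <= N x + N y) ->
  (forall i, S (F i)) -> S (\sum_i F i) /\ N (\sum_i F i) <= \sum_i N (F i).
Proof.
move=> S0 N0 ND SF; elim/big_rec2: _ => [|i x y _ [Sx Nx]]; first by rewrite N0.
have [SFx NFx] := ND _ _ (SF i) Sx; split => //.
by apply: le_trans NFx _; rewrite lerD2l.
Qed.

Lemma hermitian_double n (X : 'M[R[i]]_n) : hermitian X ->
  \sum_i \sum_j (X i j *: delta_mx i j + conjc (X i j) *: delta_mx j i) = X + X.
Proof.
move=> hX; under eq_bigr do rewrite big_split /=.
rewrite big_split /= -matrix_sum_delta; congr (_ + _).
rewrite -[X in RHS]hX [RHS]matrix_sum_delta exchange_big /=.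
by apply: eq_bigr => i _; apply: eq_bigr => j _; rewrite mxE.
Qed.

Lemma herm_norm_elementary_le n (NH : 'M[R[i]]_n -> R) : herm_norm NH ->
  exists2 K, 0 <= K & forall i j (x : R[i]),
    let H := x *: delta_mx i j + conjc x *: delta_mx j i in
    hermitian H /\ NH H <= K * (`|complex.Re x| + `|complex.Im x|).
Proof.
case=> N0 _ NZ ND.
pose Es i j : 'M[R[i]]_n := delta_mx i j + delta_mx j i.
pose Ea i j : 'M[R[i]]_n := 'i *: delta_mx i j - 'i *: delta_mx j i.
have hEs i j : hermitian (Es i j) by rewrite /hermitian adjD !adj_delta addrC.
have hEa i j : hermitian (Ea i j).
  by rewrite /hermitian adjD adjN !adjZ !adj_delta conjCi !scaleNr opprK addrC.
pose K := mxnorm1 (\matrix_(i, j) (NH (Es i j) + NH (Ea i j))).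
exists K => [|i j x H]; first exact: mxnorm1_ge0.
have [NEs NEa] : 0 <= NH (Es i j) /\ 0 <= NH (Ea i j) by split; exact: N0.
have := mxnorm1_entry (\matrix_(i, j) (NH (Es i j) + NH (Ea i j))) i j.
rewrite mxE ger0_norm ?addr_ge0 // => sumK.
have hRe := hermitianZ (Creal_real (complex.Re x)) (hEs i j).
have hIm := hermitianZ (Creal_real (complex.Im x)) (hEa i j).
rewrite /H scale_conj_split; split; first exact: hermitianD.
apply: le_trans (ND _ _ hRe hIm) _; rewrite !NZ // mulrDr ![K * _]mulrC.
by apply: lerD; apply: ler_wpM2l => //; apply: le_trans _ sumK; rewrite ?lerDl ?lerDr.
Qed.

Lemma herm_norm_le_cmxnorm1 n (NH : 'M[R[i]]_n -> R) : herm_norm NH ->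
  exists2 K, 0 <= K & forall X, hermitian X -> NH X <= K * cmxnorm1 X.
Proof.
move=> hNH; have [K K0 NHK] := herm_norm_elementary_le hNH.
case: hNH => N0 _ NZ ND; exists K => // X hX.
have NH0 : NH 0 = 0 by have := NZ 0 0 (adj0 R n n); rewrite scale0r normr0 mul0r.
have hermND Y Z : hermitian Y -> hermitian Z ->
    hermitian (Y + Z) /\ NH (Y + Z) <= NH Y + NH Z.
  by move=> hY hZ; split; [exact: hermitianD | exact: ND].
have row_sum i := subadditive_sum (adj0 R n n) NH0 hermND (fun j => (NHK i j (X i j)).1).
have [_ NHsum] := subadditive_sum (adj0 R n n) NH0 hermND (fun i => (row_sum i).1).
have NXX : NH (X + X) = 2 * NH X.
  have -> : X + X = (2 : R)%:C *: X by rewrite -mulr2n -scaler_nat rmorph_nat.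
  by rewrite NZ // ger0_norm.
have : 2 * NH X <= K * cmxnorm1 X.
  rewrite -NXX -(hermitian_double hX); apply: le_trans NHsum _.
  rewrite /cmxnorm1 /mxnorm1 -big_split mulr_sumr; apply: ler_sum => i _.
  apply: le_trans (row_sum i).2 _; rewrite -big_split mulr_sumr; apply: ler_sum => j _.
  by rewrite !mxE; exact: (NHK i j (X i j)).2.
by apply: le_trans; rewrite ler_peMl ?ler1n //; exact: N0.
Qed.

Lemma mx_norm_le_mxnorm1 l m (NM : 'M[R]_(l, m) -> R) : mx_norm NM ->
  exists2 K, 0 <= K & forall M, NM M <= K * mxnorm1 M.
Proof.
case=> N0 _ NZ ND.
have NM0 : NM 0 = 0 by have := NZ 0 0; rewrite scale0r normr0 mul0r.
have NMsum (J : finType) (F : J -> 'M[R]_(l, m)) : NM (\sum_i F i) <= \sum_i NM (F i).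
  by have [] := @subadditive_sum _ (fun=> True) NM J F I NM0 (fun x y _ _ => conj I (ND x y)).
pose K := mxnorm1 (\matrix_(i, j) NM (delta_mx i j)).
exists K => [|M]; first exact: mxnorm1_ge0.
rewrite {1}[M]matrix_sum_delta; apply: le_trans (NMsum _ _) _.
rewrite /mxnorm1 mulr_sumr; apply: ler_sum => i _; apply: le_trans (NMsum _ _) _.
rewrite mulr_sumr; apply: ler_sum => j _; rewrite NZ mulrC ler_wpM2r //.
by have := mxnorm1_entry (\matrix_(i, j) NM (delta_mx i j)) i j; rewrite mxE ger0_norm.
Qed.

End NormComparison.

Section NormEquivalence.
Local Open Scope classical_set_scope.
Variables (R : realType) (l m : nat).

Lemma mx_norm_ge_mxnorm1 (NM : 'M[R]_(l, m) -> R) : mx_norm NM ->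
  exists2 a, 0 < a & forall M, a * mxnorm1 M <= NM M.
Proof.
move=> hNM; have [K K0 NMK] := mx_norm_le_mxnorm1 hNM; case: hNM => N0 Ndef NZ ND.
have NMN M : NM (- M) = NM M by rewrite -scaleN1r NZ normrN1 mul1r.
have NMB M M' : `|NM M - NM M'| <= NM (M - M').
  have := ND (M - M') M'; have := ND (M' - M) M; rewrite !subrK -opprB NMN.
  by rewrite ler_norml => *; apply/andP; split; lra.
pose F (w : 'rV[R]_(l * m)) := NM (vec_mx w).
have cF : continuous F.
  apply: (@lipschitz_continuous _ _ _ (K * (l * m)%:R)) => [|x y]; first exact: mulr_ge0.
  apply: le_trans (NMB _ _) _; rewrite -linearB; apply: le_trans (NMK _) _.
  rewrite -mulrA ler_wpM2l //; apply: mxnorm1_le => i j.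
  by rewrite mxE; exact: rV_coord_le_norm.
pose S := [set w : 'rV[R]_(l * m) | mxnorm1 (vec_mx w) = 1].
have cS : closed S.
  rewrite /S; apply: (@closed_eqfun _ _ (fun w => mxnorm1 (vec_mx w)) (fun=> 1));
    last exact: cst_continuous.
  apply: continuous_sum => i; apply: continuous_sum => j; apply: continuous_norm.
  apply: continuous_eqfun (@coord_continuous _ 1 _ 0 (mxvec_index i j)) _ => w.
  by rewrite mxE.
have SB w : S w -> forall k, `|w 0 k| <= 1.
  move=> Sw k; case/mxvec_indexP: k => i j; rewrite -Sw.
  by have := mxnorm1_entry (vec_mx w) i j; rewrite mxE.
have Fpos w : S w -> 0 < F w.
  move=> Sw; rewrite lt_def N0 andbT; apply/eqP => /Ndef w0.
  by move: Sw; rewrite /S /= w0 mxnorm10 => /eqP; rewrite eq_sym oner_eq0.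
have [a a0 Fa] := rV_bounded_pos_lower cS SB cF Fpos.
exists a => // M; have [->|M0] := eqVneq M 0.
  by rewrite mxnorm10 mulr0 N0.
have s0 : 0 < mxnorm1 M.
  by rewrite lt_def mxnorm1_ge0 andbT; apply: contra M0 => /eqP/mxnorm1_eq0 ->.
have vecM : vec_mx ((mxnorm1 M)^-1 *: mxvec M) = (mxnorm1 M)^-1 *: M.
  by apply/matrixP => i j; rewrite !mxE mxvecE.
have := Fa ((mxnorm1 M)^-1 *: mxvec M).
rewrite /S /F /= vecM mxnorm1Z NZ gtr0_norm ?invr_gt0 // mulVf ?gt_eqF // => /(_ erefl).
by rewrite ler_pdivlMl // mulrC.
Qed.

End NormEquivalence.

Section Frobenius.
Variables (R : realType) (l m : nat).
Implicit Types M : 'M[R]_(l, m).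

Lemma frob_entry M i j : `|M i j| <= frob M.
Proof.
rewrite /frob -sqrtr_sqr; apply: ler_wsqrtr.
rewrite (bigD1 i) //= (bigD1 j) //= -addrA lerDl.
by apply: addr_ge0; apply: sumr_ge0 => *; last apply: sumr_ge0 => *; exact: sqr_ge0.
Qed.

Lemma frob_le_mxnorm1 M : frob M <= mxnorm1 M.
Proof.
rewrite /frob -(ger0_norm (mxnorm1_ge0 M)) -sqrtr_sqr; apply: ler_wsqrtr.
rewrite expr2 {2}/mxnorm1 mulr_sumr; apply: ler_sum => i _.
rewrite mulr_sumr; apply: ler_sum => j _.
by rewrite -real_normK ?num_real // expr2 ler_wpM2r // mxnorm1_entry.
Qed.

Lemma frobN M : frob (- M) = frob M.
Proof. by congr Num.sqrt; apply: eq_bigr => i _; apply: eq_bigr => j _; rewrite mxE sqrrN. Qed.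

End Frobenius.

Section Stability.
Local Open Scope classical_set_scope.
Local Open Scope complex_scope.
Variables (R : realType) (d l m : nat) (P : 'I_l -> 'I_m -> 'M[R[i]]_d).

Lemma minimizer_residual_bound (sigma Y : 'M[R[i]]_d) (f : 'M[R]_(l, m)) :
  psd sigma -> is_minimizer P (measmap P sigma + f) Y ->
  forall i j, `|measmap P (Y - sigma) i j| <= 2 * mxnorm1 f.
Proof.
move=> hs [_ Ymin] i j.
have -> : measmap P (Y - sigma) = (measmap P Y - (measmap P sigma + f)) + f.
  by rewrite measmapB opprD addrA subrK.
rewrite mxE; apply: le_trans (ler_normD _ _) _.
rewrite (_ : 2 = 1 + 1) // mulrDl mul1r lerD ?mxnorm1_entry //.
apply: le_trans (frob_entry _ i j) (le_trans (Ymin _ hs) _).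
by rewrite opprD addrA subrr add0r frobN frob_le_mxnorm1.
Qed.

Lemma mxnorm1_measmap_continuous (T : topologicalType) (X : T -> 'M[R[i]]_d) :
  mxcontinuous X -> continuous (fun t => mxnorm1 (measmap P (X t))).
Proof.
move=> cX; apply: continuous_sum => i; apply: continuous_sum => j; apply: continuous_norm.
have [ctr _] := ccontinuous_sum (fun k => mxcontinuousM cX (mxcontinuous_cst _ (P i j)) k k).
by apply: continuous_eqfun ctr _ => t; rewrite mxE.
Qed.

Hypotheses (d0 : (0 < d)%N) (l0 : (0 < l)%N).
Hypotheses (hP : forall i, POVM (P i)) (hQ : determines_pure P).

Lemma measmap_stability_sphere : exists2 c, 0 < c & forall X r,
  hermitian X -> dotc r r = 1 -> psd_orth X r -> cmxnorm1 X = 1 ->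
  c <= mxnorm1 (measmap P X).
Proof.
pose Xof := @ccoord_mx R ('I_d * 'I_d + 'I_d)%type d d (fun i j => inl (i, j)).
pose rof := @ccoord_mx R ('I_d * 'I_d + 'I_d)%type d 1 (fun k _ => inr k).
have cX : mxcontinuous Xof by exact: ccoord_mx_continuous.
have cr : mxcontinuous rof by exact: ccoord_mx_continuous.
pose S := [set w | [/\ hermitian (Xof w), dotc (rof w) (rof w) = 1
                     & psd_orth (Xof w) (rof w)]] `&` [set w | cmxnorm1 (Xof w) = 1].
have cS : closed S.
  apply: closedI (closed_psd_orth cX cr) _.
  apply: (@closed_eqfun _ _ (fun w => cmxnorm1 (Xof w)) (fun=> 1)); last exact: cst_continuous.
  exact: cmxnorm1_continuous.
have SB w : S w -> forall k, `|w 0 k| <= 1.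
  move=> [[_ r1 _] X1]; apply: ccoord_bound => -[[i j]|k].
    by have := cmxnorm1_entry (Xof w) i j; rewrite X1 mxE.
  by apply: normc_le1; have := dotc_entry_le (rof w) k; rewrite r1 mxE.
have cF : continuous (fun w => mxnorm1 (measmap P (Xof w))).
  exact: mxnorm1_measmap_continuous.
have Fpos w : S w -> 0 < mxnorm1 (measmap P (Xof w)).
  move=> [[hX r1 Xr] X1]; rewrite lt_def mxnorm1_ge0 andbT.
  apply/eqP => /mxnorm1_eq0 MX0; move: X1.
  rewrite /= (psd_orth_measmap_eq0 d0 l0 hP hQ hX Xr MX0) cmxnorm10.
  by move=> /eqP; rewrite eq_sym oner_eq0.
have [c c0 Fc] := rV_bounded_pos_lower cS SB cF Fpos.
exists c => // X r hX r1 Xr X1.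
pose w := cvec (fun t => match t with inl ij => X ij.1 ij.2 | inr k => r k 0 end).
have Xw : Xof w = X by rewrite /Xof ccoord_mx_cvec; apply/matrixP => i j; rewrite mxE.
have rw : rof w = r.
  by rewrite /rof ccoord_mx_cvec; apply/matrixP => i j; rewrite mxE (ord1 j).
by have := Fc w; rewrite /S /= Xw rw; apply.
Qed.

Lemma measmap_stability : exists2 c, 0 < c & forall X r,
  hermitian X -> dotc r r = 1 -> psd_orth X r ->
  c * cmxnorm1 X <= mxnorm1 (measmap P X).
Proof.
have [c c0 Fc] := measmap_stability_sphere; exists c => // X r hX r1 Xr.
have [->|X0] := eqVneq X 0; first by rewrite cmxnorm10 mulr0 mxnorm1_ge0.
have s0 : 0 < cmxnorm1 X.
  by rewrite lt_def cmxnorm1_ge0 andbT; apply: contra X0 => /eqP/cmxnorm1_eq0 ->.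
pose a := (cmxnorm1 X)^-1; have a0 : 0 < a by rewrite invr_gt0.
have Xr' : psd_orth (a%:C *: X) r.
  by move=> y ry; rewrite sesq_mxZ; apply: mulr_ge0; [rewrite ler0c ltW | exact: Xr].
have X1 : cmxnorm1 (a%:C *: X) = 1 by rewrite cmxnorm1Z gtr0_norm // mulVf ?gt_eqF.
have := Fc _ _ (hermitianZ (Creal_real a) hX) r1 Xr' X1.
by rewrite measmapZ mxnorm1Z gtr0_norm // ler_pdivlMl // mulrC.
Qed.

End Stability.

Unset Implicit Arguments.

Theorem theorem4 (R : realType) (d l m : nat)
  (hd : (0 < d)%N) (hl : (0 < l)%N) (hm : (0 < m)%N)
  (NH : 'M[R[i]]_d -> R) (NM : 'M[R]_(l, m) -> R)
  (hNH : herm_norm NH) (hNM : mx_norm NM)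
  (P : 'I_l -> 'I_m -> 'M[R[i]]_d)
  (hP : forall i, POVM (P i))
  (hQ : determines_pure P) :
  exists CQ : R, 0 < CQ /\
    forall eps : R, 0 < eps ->
    forall sigma : 'M[R[i]]_d, pure_state sigma ->
    forall f : 'M[R]_(l, m), NM f <= eps ->
    forall Y : 'M[R[i]]_d, is_minimizer P (measmap P sigma + f) Y ->
      NH (Y - sigma) <= CQ * eps.
Proof.
have [K K0 NHK] := herm_norm_le_cmxnorm1 hNH.
have [a a0 aNM] := mx_norm_ge_mxnorm1 hNM.
have [c c0 stab] := measmap_stability hd hl hP hQ.
pose L : R := (l * m)%:R; have L0 : 0 < L by rewrite ltr0n muln_gt0 hl hm.
exists ((K + 1) * (2 * L / (c * a))); split.
  by rewrite mulr_gt0 ?ltr_wpDl ?divr_gt0 ?mulr_gt0.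
move=> eps eps0 sigma hs f hf Y hY.
have [r [r1 Xr]] := psd_orth_sub_pure hs hY.1.
have hX : hermitian (Y - sigma) := hermitianB hY.1.1 hs.1.1.1.
have f1 : mxnorm1 f <= eps / a by rewrite ler_pdivlMr // mulrC (le_trans (aNM f)).
have MX := mxnorm1_le (minimizer_residual_bound hs.1.1 hY).
have : c * cmxnorm1 (Y - sigma) <= L * (2 * (eps / a)).
  apply: le_trans (stab _ _ hX r1 Xr) (le_trans MX _).
  by rewrite ler_wpM2l ?ler_wpM2l // ltW.
rewrite -ler_pdivlMl // (_ : c^-1 * _ = 2 * L / (c * a) * eps); last first.
  by rewrite invfM; ring.
move=> cmxX; apply: le_trans (NHK _ hX) _.
apply: le_trans (_ : (K + 1) * cmxnorm1 (Y - sigma) <= _).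
  by rewrite ler_wpM2r ?cmxnorm1_ge0 ?lerDl.
by rewrite -[leRHS]mulrA ler_wpM2l ?addr_ge0.
Qed.
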